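(* Let $R$ be a multirectangle in $\mathbb{R}^d$. For each $1\le i\le d$ let $F_i\subseteq(0,\infty)$ be a $\mathbb{Q}$-linearly independent set. Let $\mathcal{P}$ and $\mathcal{P}'$ be two finite partitions of $R$ into rectangles such that $\lambda(\operatorname{pr}_i(K))\in F_i$ for every $K\in\mathcal{P}\cup\mathcal{P}'$ and every $i$. Then there exists a bijection $\delta:\mathcal{P}\to\mathcal{P}'$ such that for every $K\in\mathcal{P}$ the rectangle $\delta(K)$ is a translate of $K$; moreover $\delta$ can be chosen with $\delta(K)=K$ for every $K\in\mathcal{P}\cap\mathcal{P}'$.
   Context: A rectangle in $\mathbb{R}^d$ is a set $\prod_{i=1}^d[a_i,b_i)$ with $a_i<b_i$ real; a multirectangle is a finite union of rectangles. $\operatorname{pr}_i$ is the projection onto the $i$-th coordinate and $\lambda$ is Lebesgue measure on $\mathbb{R}$. *)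

From HB Require Import structures.
From mathcomp Require Import all_boot all_order all_algebra.
From mathcomp Require Import all_classical all_reals all_analysis.
Set Implicit Arguments. Unset Strict Implicit. Unset Printing Implicit Defensive.
Import Order.TTheory GRing.Theory Num.Theory.
Local Open Scope classical_set_scope.
Local Open Scope ring_scope.

Definition box {R : realType} {d : nat} (a b : 'I_d -> R) : set ('I_d -> R) :=
  [set x | forall i, a i <= x i < b i].

Definition is_rectangle {R : realType} {d : nat} (K : set ('I_d -> R)) : Prop :=
  exists a b : 'I_d -> R, (forall i, a i < b i) /\ K = box a b.

Definition is_multirectangle {R : realType} {d : nat} (M : set ('I_d -> R)) : Prop :=
  exists (n : nat) (K : 'I_n -> set ('I_d -> R)),
    (forall k, is_rectangle (K k)) /\ M = \bigcup_(k in [set: 'I_n]) K k.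

Definition rect_partition {R : realType} {d : nat}
    (M : set ('I_d -> R)) (P : set (set ('I_d -> R))) : Prop :=
  [/\ finite_set P, (forall K, P K -> is_rectangle K),
      trivIset P id & \bigcup_(K in P) K = M].

Definition pr {R : realType} {d : nat} (i : 'I_d) (K : set ('I_d -> R)) : set R :=
  (fun x => x i) @` K.

Definition Q_lin_indep {R : realType} (F : set R) : Prop :=
  forall (s : seq R) (c : R -> rat), uniq s -> (forall x, x \in s -> F x) ->
    \sum_(x <- s) ratr (c x) * x = 0 -> forall x, x \in s -> c x = 0.

Definition translate {R : realType} {d : nat} (K : set ('I_d -> R)) (v : 'I_d -> R)
  : set ('I_d -> R) := [set (fun i => x i + v i) | x in K].

(* Weight the pieces of P by +1 and those of P' by -1.  Both families partition
   M, so the signed sum of their indicator functions vanishes identically.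
   Fixing all coordinates but one reduces to dimension one: if an integer
   combination of indicators of intervals [a, b) vanishes, then the weights
   balance at every endpoint, so the weighted sum of the lengths b - a is 0, and
   Q-linear independence of the lengths forces the total weight of the intervals
   of each given length to be 0.  Inductively, P and P' contain equally many
   rectangles of each shape, and matching them shape by shape, keeping the
   common pieces in place, gives a bijection by translations. *)

From HB Require Import structures.
From mathcomp Require Import all_boot all_order all_algebra.
From mathcomp Require Import all_classical all_reals all_analysis.
From mathcomp Require Import lra.
Import Order.TTheory GRing.Theory Num.Theory.
Set Implicit Arguments. Unset Strict Implicit. Unset Printing Implicit Defensive.
Local Open Scope classical_set_scope.
Local Open Scope ring_scope.

Section KeyBijection.
Variables (T K : eqType) (k : T -> K).

(* The n-th element of s with key t is sent to the n-th element of s' with key t. *)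
Definition key_match (s s' : seq T) (x : T) : T :=
  nth x [seq y <- s' | k y == k x] (index x [seq y <- s | k y == k x]).

Lemma key_match_bij (s s' : seq T) : uniq s -> uniq s' ->
  (forall t, count (fun x => k x == t) s = count (fun x => k x == t) s') ->
  set_bij [set` s] [set` s'] (key_match s s') /\
  {in s, forall x, k (key_match s s' x) = k x}.
Proof.
move=> us us' cnt.
have sizeE t : size [seq y <- s | k y == t] = size [seq y <- s' | k y == t].
  by rewrite !size_filter cnt.
have matchP x : x \in s -> key_match s s' x \in [seq y <- s' | k y == k x].
  move=> xs; rewrite /key_match mem_nth // -sizeE index_mem.
  by rewrite mem_filter eqxx.
have matchK x : x \in s -> k (key_match s s' x) = k x.
  by move=> /matchP; rewrite mem_filter => /andP[/eqP].
split=> //; split.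
- by move=> x /= /matchP; rewrite mem_filter => /andP[].
- move=> x y; rewrite !inE /= => xs ys gxy.
  have kxy : k x = k y by rewrite -(matchK x xs) -(matchK y ys) gxy.
  move: gxy; rewrite /key_match kxy; set L := [seq z <- s | _].
  set L' := [seq z <- s' | _].
  have xL : x \in L by rewrite mem_filter kxy eqxx.
  have yL : y \in L by rewrite mem_filter eqxx.
  have sL : size L = size L' by rewrite sizeE.
  rewrite (set_nth_default y) -?sL ?index_mem //.
  move/eqP; rewrite nth_uniq ?filter_uniq // -?sL ?index_mem // => /eqP ixy.
  by rewrite -(nth_index x xL) ixy nth_index.
- move=> y /= ys'; set L := [seq z <- s | k z == k y].
  set L' := [seq z <- s' | k z == k y].
  have yL' : y \in L' by rewrite mem_filter eqxx.
  have iL : (index y L' < size L)%N by rewrite sizeE index_mem.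
  have xL : nth y L (index y L') \in L by rewrite mem_nth.
  exists (nth y L (index y L')); first by move: xL; rewrite mem_filter => /andP[].
  move: xL; rewrite /key_match mem_filter => /andP[/eqP -> _].
  rewrite -/L -/L' index_uniq ?filter_uniq //.
  by rewrite (set_nth_default y) ?nth_index // -sizeE.
Qed.

Lemma count_notin_eq (s s' : seq T) (p : pred T) : uniq s -> uniq s' ->
  count p s = count p s' ->
  count p [seq x <- s | x \notin s'] = count p [seq x <- s' | x \notin s].
Proof.
move=> us us'.
have common : perm_eq [seq x <- s | x \in s'] [seq x <- s' | x \in s].
  by apply: uniq_perm; rewrite ?filter_uniq // => x; rewrite !mem_filter andbC.
have splitE (u v : seq T) :
    count p u = (count p [seq x <- u | x \in v] + count p [seq x <- u | x \notin v])%N.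
  by rewrite -count_cat (permP (permEl (perm_filterC (mem v) u))).
by rewrite (splitE s s') (splitE s' s) (permP common) => /eqP; rewrite eqn_add2l => /eqP.
Qed.

Lemma key_bij_id_on_common (s s' : seq T) : uniq s -> uniq s' ->
  (forall t, count (fun x => k x == t) s = count (fun x => k x == t) s') ->
  exists g : T -> T, [/\ set_bij [set` s] [set` s'] g,
    {in s, forall x, k (g x) = k x} & {in s, forall x, x \in s' -> g x = x}].
Proof.
move=> us us' cnt; set s1 := [seq x <- s | x \notin s'].
set s1' := [seq x <- s' | x \notin s].
have [[g1_fun g1_inj g1_surj] g1K] := key_match_bij (filter_uniq _ us)
  (filter_uniq _ us') (fun t => count_notin_eq us us' (cnt t)).
have g1_out x : x \in s -> x \notin s' -> key_match s1 s1' x \in s1'.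
  by move=> xs xs'; apply: (g1_fun x); rewrite /= mem_filter xs xs'.
exists (fun x => if x \in s' then x else key_match s1 s1' x); split; [split| |].
- move=> x /= xs; case: ifP => // /negbT xs'.
  by have := g1_out x xs xs'; rewrite mem_filter => /andP[].
- move=> x y; rewrite !inE /= => xs ys.
  case: ifPn => xs'; case: ifPn => ys' //.
  + by move=> exy; have := g1_out y ys ys'; rewrite -exy mem_filter xs.
  + by move=> exy; have := g1_out x xs xs'; rewrite exy mem_filter ys.
  + by apply: g1_inj; rewrite in_setE /= mem_filter ?xs ?ys ?xs' ?ys'.
- move=> y /= ys'; case: (boolP (y \in s)) => ys; first by exists y; rewrite /= ?ys'.
  have : [set` s1'] y by rewrite /= mem_filter ys ys'.
  move=> /g1_surj [x /=]; rewrite mem_filter => /andP[xs' xs] gx.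
  by exists x; rewrite // (negbTE xs').
- by move=> x xs; case: ifP => // xs'; rewrite g1K // mem_filter xs xs'.
- by move=> x _ ->.
Qed.

End KeyBijection.

Lemma big_group_key (T K : eqType) (V : nmodType) (s : seq K) (r : seq T)
    (k : T -> K) (F : T -> V) :
  uniq s -> {subset map k r <= s} ->
  \sum_(e <- r) F e = \sum_(q <- s) \sum_(e <- r | k e == q) F e.
Proof.
move=> us rs; under [RHS]eq_bigr do rewrite big_mkcond /=.
rewrite exchange_big; apply: eq_big_seq => e er.
rewrite (bigD1_seq (k e)) ?rs ?map_f //= eqxx big1 ?addr0 // => q.
by rewrite eq_sym => /negbTE ->.
Qed.

Lemma sum_intr_mul_key (T : eqType) (V : pzRingType) (s : seq V) (r : seq T)
    (k : T -> V) (c : T -> int) :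
  uniq s -> {subset map k r <= s} ->
  \sum_(e <- r) (c e)%:~R * k e = \sum_(q <- s) (\sum_(e <- r | k e == q) c e)%:~R * q.
Proof.
move=> us rs; rewrite (big_group_key _ us rs); apply: eq_bigr => q _.
by rewrite rmorph_sum mulr_suml; apply: eq_bigr => e /eqP ->.
Qed.

Section OneDimension.
Variable R : realType.

Lemma exists_gap_below (s : seq R) (q : R) :
  exists2 y, y < q & forall p, p \in s -> p < q -> p <= y.
Proof.
elim: s => [|p s [y yq ys]]; first by exists (q - 1) => //; lra.
have [pq|qp] := ltP p q.
  exists (Num.max y p); first by rewrite gt_max yq pq.
  move=> p'; rewrite inE => /orP[/eqP -> _|/ys p'y /p'y {}p'y].
    by rewrite le_max lexx orbT.
  by rewrite le_max p'y.
exists y => // p'; rewrite inE => /orP[/eqP ->|/ys //].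
by rewrite ltNge qp.
Qed.

Lemma point_weights_eq (T : eqType) (r : seq T) (c : T -> int) (p p' : T -> R) :
  (forall y, \sum_(e <- r | p e <= y) c e = \sum_(e <- r | p' e <= y) c e) ->
  forall q, \sum_(e <- r | p e == q) c e = \sum_(e <- r | p' e == q) c e.
Proof.
move=> H q.
have [y yq gap] := exists_gap_below ([seq p e | e <- r] ++ [seq p' e | e <- r]) q.
(* No point lies in ]y, q[, so the sums up to q and up to y differ by the points at q. *)
have atE (f : T -> R) : {subset map f r <= map p r ++ map p' r} ->
    \sum_(e <- r | f e == q) c e =
    \sum_(e <- r | f e <= q) c e - \sum_(e <- r | f e <= y) c e.
  move=> fr; apply/eqP; rewrite eq_sym subr_eq (bigID (fun e => f e == q)) /=.
  apply/eqP; congr (_ + _).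
    by apply: eq_bigl => e; case: eqVneq => [->|]; rewrite ?lexx ?andbF.
  rewrite big_seq_cond [RHS]big_seq_cond; apply: eq_bigl => e.
  case er: (e \in r) => //=.
  have fe := gap (f e) (fr _ (map_f f er)).
  apply/idP/idP => [/andP[fq fnq]|fy]; first by apply: fe; rewrite lt_neqAle fnq.
  by rewrite lt_eqF ?(le_lt_trans fy yq) // (le_trans fy (ltW yq)).
rewrite !atE ?H // => x xr; rewrite mem_cat xr ?orbT //.
Qed.

Lemma interval_endpoints_balance (T : eqType) (r : seq T) (c : T -> int)
    (a b : T -> R) :
  (forall e, e \in r -> a e < b e) ->
  (forall y, \sum_(e <- r | a e <= y < b e) c e = 0) ->
  forall q, \sum_(e <- r | a e == q) c e = \sum_(e <- r | b e == q) c e.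
Proof.
move=> ab H; apply: point_weights_eq => y.
rewrite (bigID (fun e => y < b e)) /= H add0r big_seq_cond [RHS]big_seq_cond.
apply: eq_bigl => e; case er: (e \in r) => //=.
rewrite -leNgt andbC; apply/andP/idP => [[]//|by_]; split=> //.
exact: le_trans (ltW (ab e er)) by_.
Qed.

Lemma interval_weighted_lengths (T : eqType) (r : seq T) (c : T -> int)
    (a b : T -> R) :
  (forall e, e \in r -> a e < b e) ->
  (forall y, \sum_(e <- r | a e <= y < b e) c e = 0) ->
  \sum_(e <- r) (c e)%:~R * (b e - a e) = 0.
Proof.
move=> ab H; set s := undup (map a r ++ map b r).
have sa : {subset map a r <= s} by move=> x xr; rewrite mem_undup mem_cat xr.
have sb : {subset map b r <= s} by move=> x xr; rewrite mem_undup mem_cat xr orbT.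
under eq_bigr do rewrite mulrBr.
rewrite sumrB (sum_intr_mul_key _ (undup_uniq _) sa) (sum_intr_mul_key _ (undup_uniq _) sb).
apply/eqP; rewrite subr_eq0; apply/eqP; apply: eq_bigr => q _.
by rewrite (interval_endpoints_balance ab H).
Qed.

Lemma interval_length_sums (T : eqType) (F : set R) (r : seq T) (c : T -> int)
    (a b : T -> R) :
  Q_lin_indep F -> (forall e, e \in r -> a e < b e /\ F (b e - a e)) ->
  (forall y, \sum_(e <- r | a e <= y < b e) c e = 0) ->
  forall t, \sum_(e <- r | b e - a e == t) c e = 0.
Proof.
move=> QF hr H t; set s := undup [seq b e - a e | e <- r].
have := interval_weighted_lengths (fun e er => (hr e er).1) H.
rewrite (sum_intr_mul_key (s := s)) ?undup_uniq // => [sum0|x]; last first.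
  by rewrite mem_undup.
have coef0 := QF s (fun q => (\sum_(e <- r | b e - a e == q) c e)%:~R) (undup_uniq _).
have [ts|tNs] := boolP (t \in s).
  apply/eqP; rewrite -(intr_eq0 rat) coef0 //.
    by move=> x; rewrite mem_undup => /mapP[e er ->]; exact: (hr e er).2.
  by rewrite -[RHS]sum0; apply: eq_bigr => q _; rewrite ratr_int.
rewrite big_seq_cond big1 // => e /andP[er /eqP et].
by move: tNs; rewrite -et mem_undup (map_f (fun e => b e - a e)).
Qed.

End OneDimension.

Section Boxes.
Variables (R : realType) (d : nat).

Lemma box_shape_sums (F : 'I_d -> set R) (T : eqType) (a b : T -> 'I_d -> R)
    (J : seq 'I_d) (r : seq T) (c : T -> int) :
  (forall i, Q_lin_indep (F i)) -> uniq J ->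
  (forall e, e \in r -> forall i, a e i < b e i /\ F i (b e i - a e i)) ->
  (forall x : 'I_d -> R,
    \sum_(e <- r | all (fun i => a e i <= x i < b e i) J) c e = 0) ->
  forall t : 'I_d -> R,
    \sum_(e <- r | all (fun i => b e i - a e i == t i) J) c e = 0.
Proof.
move=> QF; elim: J r => [|j J IH] r /= uJ hr H t; first exact: H (fun=> 0).
case/andP: uJ => jJ uJ; pose shapeJ e := all (fun i => b e i - a e i == t i) J.
have slice y : \sum_(e <- r | (a e j <= y < b e j) && shapeJ e) c e = 0.
  rewrite -big_filter_cond; apply: IH => // [e|x].
    by rewrite mem_filter => /andP[_ /hr].
  rewrite big_filter_cond -[RHS](H (fun i => if i == j then y else x i)) /=.
  apply: eq_bigl => e; rewrite eqxx; congr (_ && _); apply: eq_in_all => i iJ /=.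
  by case: eqVneq => // ij; rewrite -ij iJ in jJ.
under eq_bigl do rewrite andbC; rewrite -big_filter_cond.
apply: (interval_length_sums (F := F j) (a := fun e => a e j) (b := fun e => b e j)).
- exact: QF.
- by move=> e; rewrite mem_filter => /andP[_ /hr].
- by move=> y; rewrite big_filter_cond; under eq_bigl do rewrite andbC; exact: slice.
Qed.

Lemma in_boxE (a b x : 'I_d -> R) :
  (x \in box a b) = all (fun i => a i <= x i < b i) (enum 'I_d).
Proof.
apply/idP/allP => [/[!inE] xab i _|xab]; first exact: xab.
by rewrite inE => i; apply: xab; rewrite mem_enum.
Qed.

Lemma box_shape_counts (F : 'I_d -> set R) (T : eqType) (a b : T -> 'I_d -> R)
    (s s' : seq T) :
  (forall i, Q_lin_indep (F i)) ->
  (forall e, e \in s ++ s' -> forall i, a e i < b e i /\ F i (b e i - a e i)) ->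
  (forall x, count (fun e => x \in box (a e) (b e)) s =
             count (fun e => x \in box (a e) (b e)) s') ->
  forall t, count (fun e => (fun i => b e i - a e i) == t) s =
            count (fun e => (fun i => b e i - a e i) == t) s'.
Proof.
move=> QF hs H t.
set r := [seq (e, true) | e <- s] ++ [seq (e, false) | e <- s'].
pose c (e : T * bool) : int := if e.2 then 1 else -1.
have signedE (p : pred T) :
    \sum_(e <- r | p e.1) c e = (count p s)%:R - (count p s')%:R.
  by rewrite big_cat !big_map /= sumrN -!sum1_count !natr_sum.
apply/eqP; rewrite -(eqr_nat int) -subr_eq0 -signedE.
have shapeE e : ((fun i => b e i - a e i) == t) =
    all (fun i => b e i - a e i == t i) (enum 'I_d).
  apply/eqP/allP => [<- //|et]; apply/funext => i.
  by apply/eqP/et; rewrite mem_enum.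
under eq_bigl do rewrite shapeE.
apply/eqP/(box_shape_sums (a := fun e => a e.1) (b := fun e => b e.1) QF).
- exact: enum_uniq.
- by move=> [e β]; rewrite mem_cat => /orP[] /mapP[e' e's [-> _]];
    apply: hs; rewrite mem_cat e's ?orbT.
- move=> x; under eq_bigl do rewrite -in_boxE.
  by rewrite (signedE (fun e => x \in box (a e) (b e))) H subrr.
Qed.

End Boxes.

Lemma partition_count_mem (T : Type) (M : set T) (P : set (set T))
    (s : seq (set T)) :
  uniq s -> P = [set` s] -> trivIset P id -> \bigcup_(K in P) K = M ->
  forall x, count (fun K => x \in K) s = (x \in M).
Proof.
move=> us Ps triv cup x; have [Mx|Mx] := boolP (x \in M).
  have [K0 PK0 K0x] : (\bigcup_(K in P) K) x by rewrite cup -in_setE.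
  have K0s : K0 \in s by move: PK0; rewrite Ps.
  transitivity (count_mem K0 s); last by rewrite count_uniq_mem // K0s.
  apply: eq_in_count => K Ks /=; apply/idP/eqP => [/[!inE] Kx|->]; last by rewrite inE.
  by apply: triv; rewrite ?Ps //; exists x.
transitivity (count pred0 s); last exact: count_pred0.
apply: eq_in_count => K Ks /=.
apply: contraNF Mx; rewrite !inE => Kx; rewrite -cup.
by exists K; rewrite ?Ps.
Qed.

Lemma finite_set_uniq_seq (T : eqType) (A : set T) :
  finite_set A -> exists2 s, uniq s & A = [set` s].
Proof.
move=> /finite_seqP[s ->]; exists (undup s); first exact: undup_uniq.
by apply/seteqP; split=> x /=; rewrite mem_undup.
Qed.

Section Rectangles.
Variables (R : realType) (d : nat).

Lemma rectangle_corners : exists a b : set ('I_d -> R) -> 'I_d -> R,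
  forall K, is_rectangle K -> (forall i, a K i < b K i) /\ K = box (a K) (b K).
Proof.
have /choice[ab hab] : forall K, exists ab : ('I_d -> R) * ('I_d -> R),
    is_rectangle K -> (forall i, ab.1 i < ab.2 i) /\ K = box ab.1 ab.2.
  move=> K; have [[a [b [ab ->]]]|nK] := pselect (is_rectangle K).
    by exists (a, b).
  by exists (fun=> 0, fun=> 0).
by exists (fun K => (ab K).1), (fun K => (ab K).2).
Qed.

Lemma pr_box (a b : 'I_d -> R) i : (forall j, a j < b j) ->
  pr i (box a b) = [set` `[a i, b i[%R].
Proof.
move=> ab; apply/seteqP; split=> y /=.
  by case=> x xab <-; rewrite in_itv /=; exact: xab i.
rewrite in_itv /= => yab; exists (fun j => if j == i then y else a j) => /=.
  by move=> j; case: eqVneq => [->|_] //; rewrite lexx ab.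
by rewrite eqxx.
Qed.

Lemma lebesgue_measure_pr_box (a b : 'I_d -> R) i : (forall j, a j < b j) ->
  lebesgue_measure (pr i (box a b)) = (b i - a i)%:E.
Proof. by move=> ab; rewrite pr_box // lebesgue_measure_itv /= lte_fin ab EFinD. Qed.

Lemma translate_box (a b v : 'I_d -> R) :
  translate (box a b) v = box (fun i => a i + v i) (fun i => b i + v i).
Proof.
apply/seteqP; split=> x /=.
  by case=> z zab <- i /=; rewrite lerD2r ltrD2r; exact: zab i.
move=> xab; exists (fun i => x i - v i); last by apply/funext => i; rewrite subrK.
by move=> i; have := xab i; rewrite lerBrDr ltrBlDr.
Qed.

Lemma translate_congruent_box (K K' : set ('I_d -> R)) (a b a' b' : 'I_d -> R) :
  K = box a b -> K' = box a' b' -> (fun i => b' i - a' i) = (fun i => b i - a i) ->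
  K' = translate K (fun i => a' i - a i).
Proof.
move=> -> -> shape; rewrite translate_box; congr box; apply/funext => i.
  by rewrite addrC subrK.
by have := congr1 (fun f => f i) shape => /=; lra.
Qed.

Lemma rect_partitions_shape_counts (F : 'I_d -> set R) (M : set ('I_d -> R))
    (P P' : set (set ('I_d -> R))) (s s' : seq (set ('I_d -> R)))
    (a b : set ('I_d -> R) -> 'I_d -> R) :
  (forall i, Q_lin_indep (F i)) ->
  rect_partition M P -> rect_partition M P' ->
  uniq s -> uniq s' -> P = [set` s] -> P' = [set` s'] ->
  (forall K, P K \/ P' K ->
     K = box (a K) (b K) /\ forall i, a K i < b K i /\ F i (b K i - a K i)) ->
  forall t, count (fun K => (fun i => b K i - a K i) == t) s =
            count (fun K => (fun i => b K i - a K i) == t) s'.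
Proof.
move=> QF [_ _ trivP cupP] [_ _ trivP' cupP'] us us' Ps Ps' rectF.
have inPP' K : K \in s ++ s' -> P K \/ P' K.
  by rewrite mem_cat Ps Ps' => /orP[]; [left | right].
apply: box_shape_counts => // [K /inPP' /rectF[] //|x].
have boxE u : {subset u <= s ++ s'} ->
    count (fun K => x \in box (a K) (b K)) u = count (fun K => x \in K) u.
  by move=> su; apply: eq_in_count => K /su /inPP' /rectF[<-].
have ss : {subset s <= s ++ s'} by move=> K Ks; rewrite mem_cat Ks.
have ss' : {subset s' <= s ++ s'} by move=> K Ks; rewrite mem_cat Ks orbT.
rewrite (boxE s ss) (boxE s' ss') (partition_count_mem us Ps trivP cupP).
by rewrite (partition_count_mem us' Ps' trivP' cupP').
Qed.

End Rectangles.

Theorem mainTheorem16 (R : realType) (d : nat) (M : set ('I_d -> R))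
  (F : 'I_d -> set R)
  (P P' : set (set ('I_d -> R))) :
  is_multirectangle M ->
  (forall i, (forall r, F i r -> 0 < r) /\ Q_lin_indep (F i)) ->
  rect_partition M P -> rect_partition M P' ->
  (forall K, (P K \/ P' K) -> forall i,
      exists r, F i r /\ (lebesgue_measure (pr i K) = r%:E)%E) ->
  exists delta : set ('I_d -> R) -> set ('I_d -> R),
    [/\ set_bij P P' delta,
        (forall K, P K -> exists v : 'I_d -> R, delta K = translate K v) &
        (forall K, P K -> P' K -> delta K = K)].
Proof.
move=> _ hF hP hP' hlen; have QF i := (hF i).2.
have [a [b corners]] := rectangle_corners R d.
have [[Pfin Prect _ _] [P'fin P'rect _ _]] := (hP, hP').
have rectF K : P K \/ P' K ->
    K = box (a K) (b K) /\ forall i, a K i < b K i /\ F i (b K i - a K i).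
  move=> PK; have [ab Kab] : (forall i, a K i < b K i) /\ K = box (a K) (b K).
    by apply: corners; case: PK => [/Prect|/P'rect].
  split=> // i; split=> //; have [r [Fr]] := hlen K PK i.
  by rewrite {1}Kab lebesgue_measure_pr_box // => -[->].
have [s us Ps] := finite_set_uniq_seq Pfin.
have [s' us' Ps'] := finite_set_uniq_seq P'fin.
have [g [gbij gshape gfix]] := key_bij_id_on_common us us'
  (rect_partitions_shape_counts QF hP hP' us us' Ps Ps' rectF).
exists g; split; first by rewrite Ps Ps'.
- move=> K PK; have Ks : K \in s by rewrite Ps in PK.
  have PgK : P' (g K) by rewrite Ps'; case: gbij => + _ _; apply; rewrite -Ps.
  exists (fun i => a (g K) i - a K i).
  apply: translate_congruent_box (rectF _ (or_introl PK)).1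
    (rectF _ (or_intror PgK)).1 _.
  exact: gshape.
- by move=> K; rewrite Ps Ps' /=; exact: gfix.
Qed.
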